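(* Let $A$ be a subalgebra of a $K$-algebra $E$, $\Delta\subseteq\mathrm{Der}_A(E)$, $I$ an ideal of $E$, and $S$ a left denominator set of $E$ with $\mathrm{ass}_E(S)=I$ and $S\subseteq N_\Delta(E)_0$. Let $\overline{E}=E/I$, $I'=A\cap I$, $\overline{A}=A/I'$, $\overline{S}=\{s+I\mid s\in S\}$. Then: (1) $I$ is $\Delta$-stable, i.e. $\delta(I)\subseteq I$ for all $\delta\in\Delta$; hence each $\delta$ induces $\overline{\delta}\in\mathrm{Der}_{\overline{A}}(\overline{E})$, $\overline{\delta}(e+I)=\delta(e)+I$; set $\overline{\Delta}=\{\overline{\delta}\mid\delta\in\Delta\}$. (2) If $\Delta$ is finite, then $S$ is a left denominator set of $N_\Delta(E)$ with $\mathrm{ass}_{N_\Delta(E)}(S)=N_\Delta(E)\cap I$. (3) If $\Delta$ is finite, then $N_\Delta(S^{-1}E)\cong S^{-1}N_\Delta(E)$. (4) If $\Delta$ is finite, then $N_\Delta(S^{-1}E)_i\cong S^{-1}N_\Delta(E)_i$ for all $i\ge0$. (5) $\overline{S}^{-1}\overline{E}\cong S^{-1}E$, $\overline{S}^{-1}N_{\overline{\Delta}}(\overline{E})\cong N_{\overline{\Delta}}(\overline{S}^{-1}\overline{E})\cong N_\Delta(S^{-1}E)$, and $\overline{S}^{-1}N_{\overline{\Delta}}(\overline{E})_i\cong N_{\overline{\Delta}}(\overline{S}^{-1}\overline{E})_i\cong N_\Delta(S^{-1}E)_i$ for all $i\geq0$.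
   Context: $\mathrm{Der}_A(E)$ is the set of derivations of $E$ that are $A$-module homomorphisms (derivations of $S^{-1}E$ are extended by $\delta(s^{-1}e)=s^{-1}\delta(e)$). For $i\ge1$, $\Delta^i=\{\delta_1\cdots\delta_i\mid\delta_j\in\Delta\}$; for an algebra $B$ with $\Delta$ acting by derivations, $N_\Delta(B)_i=\{b\in B\mid\Delta^{i+1}b=0\}$ ($i\ge0$) and $N_\Delta(B)=\bigcup_iN_\Delta(B)_i$. A left denominator set $S$ of a ring $B$ is a multiplicative left Ore set such that $bs=0$ ($b\in B,s\in S$) implies $tb=0$ for some $t\in S$; $\mathrm{ass}_B(S)=\{b\in B\mid sb=0\text{ for some }s\in S\}$; $S^{-1}B$ is the left localization. *)

From HB Require Import structures.
From mathcomp Require Import all_boot all_order all_algebra.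
Set Implicit Arguments. Unset Strict Implicit. Unset Printing Implicit Defensive.
Import GRing.Theory.
Local Open Scope ring_scope.

Section Defs.
Variable B : pzRingType.

Definition is_ideal (I : B -> Prop) : Prop :=
  [/\ I 0, (forall x y, I x -> I y -> I (x + y)) &
      (forall a x, I x -> I (a * x) /\ I (x * a))].

Definition is_der (d : B -> B) : Prop :=
  (forall x y, d (x + y) = d x + d y) /\
  (forall x y, d (x * y) = d x * y + x * d y).

Definition is_derA (A : B -> Prop) (d : B -> B) : Prop :=
  is_der d /\ (forall a x, A a -> d (a * x) = a * d x).

Fixpoint all_in (D : (B -> B) -> Prop) (ds : seq (B -> B)) : Prop :=
  if ds is d :: ds' then D d /\ all_in D ds' else True.

Fixpoint In_list (d : B -> B) (l : seq (B -> B)) : Prop :=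
  if l is d' :: l' then d' = d \/ In_list d l' else False.

Definition iter_comp (ds : seq (B -> B)) : B -> B :=
  foldr (fun d f => d \o f) id ds.

(* N_Delta(B)_i = { b | Delta^{i+1} b = 0 } *)
Definition nil_i (D : (B -> B) -> Prop) (i : nat) (b : B) : Prop :=
  forall ds : seq (B -> B), size ds = i.+1 ->
    all_in D ds -> iter_comp ds b = 0.

Definition nil_all (D : (B -> B) -> Prop) (b : B) : Prop :=
  exists i, nil_i D i b.

Definition finite_set_of (D : (B -> B) -> Prop) : Prop :=
  exists l : seq (B -> B), forall d, D d -> In_list d l.

Definition ass (R S : B -> Prop) (r : B) : Prop :=
  R r /\ exists s, S s /\ s * r = 0.

Definition left_denom (R S : B -> Prop) : Prop :=
  [/\ (forall s, S s -> R s), S 1, (forall s t, S s -> S t -> S (s * t)) & ~ S 0] /\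
  (forall r s, R r -> S s -> exists t r', [/\ S t, R r' & t * r = r' * s]) /\
  (forall r s, R r -> S s -> r * s = 0 -> exists t, S t /\ t * r = 0).
End Defs.

(* [left_frac R S X f]: the (ring morphism) f : B -> Q, restricted to R,
   identifies X with the left localization S^{-1}R:
   f(R) in X, f(s) invertible in Q, every x in X is f(s)^{-1} f(r),
   and ker f on R is exactly ass_R(S).  This is the standard characterization
   of the left ring (module) of fractions S^{-1}R up to isomorphism. *)
Definition left_frac (B Q : pzRingType) (R S : B -> Prop) (X : Q -> Prop)
  (f : B -> Q) : Prop :=
  [/\ (forall r, R r -> X (f r)),
      (forall s, S s -> exists u, u * f s = 1 /\ f s * u = 1),
      (forall x, X x -> exists s r, [/\ S s, R r & f s * x = f r]) &
      (forall r, R r -> (f r = 0 <-> ass R S r))].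

(* [ext] extends each derivation d in D to S^{-1}B (via f) by
   d(s^{-1} e) = s^{-1} d(e) *)
Definition ext_spec (B Q : pzRingType) (f : B -> Q) (S : B -> Prop)
  (D : (B -> B) -> Prop) (ext : (B -> B) -> Q -> Q) : Prop :=
  forall d, D d -> forall s e q, S s -> f s * q = f e -> f s * ext d q = f (d e).

Definition ext_set (B Q : pzRingType) (D : (B -> B) -> Prop)
  (ext : (B -> B) -> Q -> Q) : (Q -> Q) -> Prop :=
  fun g => exists d, D d /\ g = ext d.

Definition is_subalg (K : fieldType) (E : algType K) (A : E -> Prop) : Prop :=
  [/\ A 1, (forall x y, A x -> A y -> A (x - y)),
      (forall x y, A x -> A y -> A (x * y)) &
      (forall (k : K) x, A x -> A (k *: x))].

From HB Require Import structures.
From mathcomp Require Import all_boot all_order all_algebra.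
From Stdlib Require Import FunctionalExtensionality Classical.
Set Implicit Arguments. Unset Strict Implicit. Unset Printing Implicit Defensive.
Import GRing.Theory.
Local Open Scope ring_scope.

(* Elements of S are Delta-constants, so left and right multiplication by them
   commutes with every word in Delta.  Combined with the Ore condition, this
   lets a single left factor from S clear the S-torsion of the finitely many
   words of length i+1 applied to an element, which yields the Ore condition
   in N_Delta(E) and fraction representations for N_Delta(S^{-1}E)_i.  Modulo
   I = ass(S) the set S acts without torsion, so S^{-1}E is also the
   localization of E/I, the induced derivations extend to the same derivations
   of S^{-1}E, and no clearing is needed since that localization map is
   injective. *)

Section Nilpotence.
Variable B : pzRingType.
Implicit Types (D : (B -> B) -> Prop) (d : B -> B) (ds : seq (B -> B)).

Lemma assE (R S : B -> Prop) r : ass R S r <-> R r /\ ass (fun _ => True) S r.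
Proof. by split=> [[Rr ann]|[Rr [_ ann]]]. Qed.

Lemma all_in_sub D1 D2 ds : (forall g, D1 g -> D2 g) -> all_in D1 ds -> all_in D2 ds.
Proof. by move=> sub12; elim: ds => //= d ds IH [/sub12 D2d /IH]. Qed.

Lemma nil_i_eq D1 D2 i x :
  (forall g, D1 g <-> D2 g) -> nil_i D1 i x <-> nil_i D2 i x.
Proof.
move=> eq12; split=> nx ds sz ads; apply: nx => //.
  by apply: all_in_sub ads => g /eq12.
by apply: all_in_sub ads => g /eq12.
Qed.

Lemma nil_all_eq D1 D2 x :
  (forall g, D1 g <-> D2 g) -> nil_all D1 x <-> nil_all D2 x.
Proof. by move=> eq12; split=> -[i nx]; exists i; apply/(nil_i_eq _ _ eq12). Qed.

Lemma iter_comp_finite D x n : finite_set_of D -> exists xs : seq B,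
  forall ds, size ds = n -> all_in D ds -> iter_comp ds x \in xs.
Proof.
case=> l inl; elim: n => [|n [xs IH]].
  by exists [:: x]; case=> //= _ _; rewrite mem_seq1.
exists (flatten [seq map g xs | g <- l]); case=> //= d ds [sz] [Dd ads].
have: In_list d l by exact: inl.
elim: l {inl} => //= g l IHl [<-|inl]; rewrite mem_cat; last by rewrite IHl ?orbT.
by rewrite map_f ?IH.
Qed.

Lemma derB d : is_der d -> forall x y, d (x - y) = d x - d y.
Proof. by case=> dD _ x y; rewrite -[in d x](subrK y x) (dD (x - y)) addrK. Qed.

Lemma der0 d : is_der d -> d 0 = 0.
Proof. by move=> der_d; have := derB der_d 0 0; rewrite !subrr. Qed.

Lemma nil0_der D t d : nil_i D 0 t -> D d -> d t = 0.
Proof. by move=> nt Dd; exact: (nt [:: d]). Qed.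

Lemma ass_der S d e : is_der d -> (forall s, S s -> d s = 0) ->
  ass (fun _ => True) S e -> ass (fun _ => True) S (d e).
Proof.
move=> der_d dS [_ [s [Ss se0]]]; split=> //; exists s; split=> //.
by have := der_d.2 s e; rewrite se0 (dS s Ss) mul0r add0r der0 => // ->.
Qed.

Section Constants.
Variables (D : (B -> B) -> Prop) (t : B).
Hypotheses (derD : forall d, D d -> is_der d) (t_const : nil_i D 0 t).

Lemma iter_comp_mull ds x : all_in D ds -> iter_comp ds (t * x) = t * iter_comp ds x.
Proof.
elim: ds => //= d ds IH [Dd /IH ->].
by rewrite (derD Dd).2 (nil0_der t_const Dd) mul0r add0r.
Qed.

Lemma iter_comp_mulr ds x : all_in D ds -> iter_comp ds (x * t) = iter_comp ds x * t.
Proof.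
elim: ds => //= d ds IH [Dd /IH ->].
by rewrite (derD Dd).2 (nil0_der t_const Dd) mulr0 addr0.
Qed.

End Constants.

Section CommonAnnihilator.
Variable S : B -> Prop.
Hypothesis HS : left_denom (fun _ => True) S.

(* The Ore condition turns a pair of annihilators [t] of [xs] and [s] of [x]
   into a common one [u t], where [u t = r s]. *)
Lemma common_ann (P : B -> Prop) (xs : seq B) :
  (forall y, y \in xs -> P y -> ass (fun _ => True) S y) ->
  exists2 t, S t & forall y, y \in xs -> P y -> t * y = 0.
Proof.
have [[_ S1 SM _] [Ore _]] := HS.
elim: xs => [|x xs IH] annP; first by exists 1.
have [t St tP] : exists2 t, S t & forall y, y \in xs -> P y -> t * y = 0.
  by apply: IH => y xy; apply: annP; rewrite in_cons xy orbT.
have [Px|nPx] := classic (P x); last first.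
  by exists t => // y; rewrite in_cons => /predU1P [-> /nPx|]; last exact: tP.
have [_ [s [Ss sx0]]] := annP x (mem_head x xs) Px.
have [u [r [Su _ utr]]] := Ore t s I Ss.
exists (u * t) => [|y]; first exact: SM.
rewrite in_cons => /predU1P [-> _|xy Py]; first by rewrite utr -mulrA sx0 mulr0.
by rewrite -mulrA tP // mulr0.
Qed.

Lemma words_common_ann D x n : finite_set_of D ->
  (forall ds, size ds = n -> all_in D ds -> ass (fun _ => True) S (iter_comp ds x)) ->
  exists2 t, S t & forall ds, size ds = n -> all_in D ds -> t * iter_comp ds x = 0.
Proof.
move=> finD ann; have [xs xsP] := iter_comp_finite x n finD.
pose P y := exists ds, [/\ size ds = n, all_in D ds & y = iter_comp ds x].
have [t St tP] : exists2 t, S t & forall y, y \in xs -> P y -> t * y = 0.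
  by apply: common_ann => y _ [ds [sz ads ->]]; exact: ann.
by exists t => // ds sz ads; apply: tP; [exact: xsP | exists ds].
Qed.

Variable D : (B -> B) -> Prop.
Hypotheses (derD : forall d, D d -> is_der d) (S_const : forall s, S s -> nil_i D 0 s).
Hypothesis finD : finite_set_of D.

Lemma nil_i_of_torsion i x :
  (forall ds, size ds = i.+1 -> all_in D ds -> ass (fun _ => True) S (iter_comp ds x)) ->
  exists2 u, S u & nil_i D i (u * x).
Proof.
move=> ann; have [u Su uP] := words_common_ann finD ann.
by exists u => // ds sz ads; rewrite (iter_comp_mull derD (S_const Su)) // uP.
Qed.

Lemma left_denom_nil_all : left_denom (nil_all D) S.
Proof.
have [[_ S1 SM S0] [Ore Den]] := HS.
split; [split=> // s Ss; exists 0%N; exact: S_const | split]; last first.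
  by move=> r s _; exact: Den.
move=> r s [i nr] Ss; have [t [r' [St _ trs]]] := Ore r s I Ss.
have [u Su nur'] : exists2 u, S u & nil_i D i (u * r').
  apply: nil_i_of_torsion => ds sz ads.
  have [t' [St' t'0]] : exists t', S t' /\ t' * iter_comp ds r' = 0.
    apply: (Den _ s) => //; rewrite -(iter_comp_mulr derD (S_const Ss)) // -trs.
    by rewrite (iter_comp_mull derD (S_const St)) // nr // mulr0.
  by split=> //; exists t'.
by exists (u * t), (u * r'); split; [exact: SM | exists i | rewrite -!mulrA trs].
Qed.

End CommonAnnihilator.

End Nilpotence.

Section Fractions.
Variables (B Q : pzRingType) (f : {rmorphism B -> Q}) (S : B -> Prop).
Hypothesis Hf : left_frac (fun _ => True) S (fun _ => True) f.

Lemma left_frac_ker (R : B -> Prop) r : R r -> f r = 0 <-> ass R S r.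
Proof.
have [_ _ _ kerf] := Hf; move=> Rr; rewrite assE.
by split=> [/(kerf r I).1|[_ /(kerf r I).2]].
Qed.

Lemma left_frac_nil_all D DE :
  (forall i, left_frac (nil_i D i) S (nil_i DE i) f) ->
  left_frac (nil_all D) S (nil_all DE) f.
Proof.
move=> fracP; split.
- by move=> r [i nr]; have [fP _ _ _] := fracP i; exists i; exact: fP.
- by have [_ inv _ _] := Hf.
- move=> x [i nx]; have [_ _ repP _] := fracP i.
  by have [s [r [Ss nr sx]]] := repP x nx; exists s, r; split=> //; exists i.
- exact: left_frac_ker.
Qed.

Variables (D : (B -> B) -> Prop) (ext : (B -> B) -> Q -> Q).
Hypothesis Hext : ext_spec f S D ext.

Lemma ext_spec_unique d g : D d ->
  (forall s e q, S s -> f s * q = f e -> f s * g q = f (d e)) -> g = ext d.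
Proof.
move=> Dd gP; apply: functional_extensionality => q; have [_ inv repP _] := Hf.
have [s [e [Ss _ sq]]] := repP q I; have [u [us _]] := inv s Ss.
by rewrite -[g q]mul1r -[ext d q]mul1r -us -!mulrA (gP s e) // (Hext Dd Ss sq).
Qed.

Lemma all_in_ext_set ds :
  all_in (ext_set D ext) ds -> exists2 ds', all_in D ds' & ds = map ext ds'.
Proof.
elim: ds => [|g ds IH] /=; first by exists [::].
by case=> [[d [Dd ->]] /IH [ds' ads' ->]]; exists (d :: ds').
Qed.

Lemma all_in_map_ext ds : all_in D ds -> all_in (ext_set D ext) (map ext ds).
Proof. by elim: ds => //= d ds IH [Dd /IH]; split=> //; exists d. Qed.

Lemma ext_spec_iter s e q ds : S s -> f s * q = f e -> all_in D ds ->
  f s * iter_comp (map ext ds) q = f (iter_comp ds e).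
Proof. by move=> Ss sq; elim: ds => //= d ds IH [Dd /IH]; exact: Hext. Qed.

Lemma nil_i_ext_iter i s e q ds : S s -> f s * q = f e ->
  nil_i (ext_set D ext) i q -> size ds = i.+1 -> all_in D ds -> f (iter_comp ds e) = 0.
Proof.
move=> Ss sq nq sz ads; rewrite -(ext_spec_iter Ss sq ads) nq ?mulr0 ?size_map //.
exact: all_in_map_ext.
Qed.

Hypothesis S1 : S 1.

Lemma nil_i_map i r : nil_i D i r -> nil_i (ext_set D ext) i (f r).
Proof.
move=> nr ds sz /all_in_ext_set [ds' ads' eds]; rewrite {}eds size_map in sz *.
have := ext_spec_iter (e := r) (q := f r) S1 _ ads'; rewrite rmorph1 !mul1r => -> //.
by rewrite nr ?rmorph0.
Qed.

Lemma left_frac_nil_i_of_reps i :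
  (forall x, nil_i (ext_set D ext) i x ->
     exists s r, [/\ S s, nil_i D i r & f s * x = f r]) ->
  left_frac (nil_i D i) S (nil_i (ext_set D ext) i) f.
Proof.
move=> repP; split=> //; first exact: nil_i_map.
  by have [_ inv _ _] := Hf.
exact: left_frac_ker.
Qed.

Lemma left_frac_nil_i_inj i : (forall r, f r = 0 -> r = 0) ->
  left_frac (nil_i D i) S (nil_i (ext_set D ext) i) f.
Proof.
move=> f_inj; apply: left_frac_nil_i_of_reps => x nx; have [_ _ repP _] := Hf.
have [s [e [Ss _ sx]]] := repP x I; exists s, e; split=> // ds sz ads.
exact/f_inj/(nil_i_ext_iter Ss sx nx).
Qed.

Hypotheses (HS : left_denom (fun _ => True) S) (derD : forall d, D d -> is_der d).
Hypotheses (S_const : forall s, S s -> nil_i D 0 s) (finD : finite_set_of D).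

Lemma left_frac_nil_i i : left_frac (nil_i D i) S (nil_i (ext_set D ext) i) f.
Proof.
apply: left_frac_nil_i_of_reps => x nx; have [_ _ repP _] := Hf.
have [s [e [Ss _ sx]]] := repP x I; have [[_ _ SM _] _] := HS.
have [u Su nue] : exists2 u, S u & nil_i D i (u * e).
  apply: (nil_i_of_torsion HS derD S_const finD) => ds sz ads.
  exact/(left_frac_ker I)/(nil_i_ext_iter Ss sx nx sz ads).
by exists (u * s), (u * e); split; [exact: SM | | rewrite !rmorphM -mulrA sx].
Qed.

End Fractions.

Section Quotient.
Variables (E Ebar : pzRingType) (pi : {rmorphism E -> Ebar}).
Hypothesis pi_surj : forall x, exists e, pi e = x.

Lemma pi_surj_eq x : exists e, pi e == x.
Proof. by have [e <-] := pi_surj x; exists e. Qed.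

Definition pinv x := xchoose (pi_surj_eq x).

Lemma pinvK : cancel pinv pi.
Proof. by move=> x; apply/eqP; exact: (xchooseP (pi_surj_eq x)). Qed.

Lemma pinv_pi_eq (T : zmodType) (g : E -> T) :
  (forall x y, g (x - y) = g x - g y) -> (forall e, pi e = 0 -> g e = 0) ->
  forall e, g (pinv (pi e)) = g e.
Proof.
move=> gB gker e; apply/eqP; rewrite -subr_eq0 -gB; apply/eqP/gker.
by rewrite rmorphB pinvK subrr.
Qed.

Lemma quotient_derA (A : E -> Prop) d : is_derA A d ->
  (forall e, pi e = 0 -> pi (d e) = 0) ->
  exists db, (forall e, db (pi e) = pi (d e)) /\
             is_derA (fun x => exists a, A a /\ x = pi a) db.
Proof.
move=> [[dD dM] dA] dker; exists (fun x => pi (d (pinv x))).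
have dbE : forall e, pi (d (pinv (pi e))) = pi (d e).
  by apply: (pinv_pi_eq (g := pi \o d)) => // x y /=; rewrite derB ?rmorphB.
split=> //; split; first split.
- by move=> x y; have [a <-] := pi_surj x; have [b <-] := pi_surj y;
    rewrite -rmorphD !dbE dD rmorphD.
- by move=> x y; have [a <-] := pi_surj x; have [b <-] := pi_surj y;
    rewrite -rmorphM !dbE dM rmorphD !rmorphM.
- by move=> _ x [a [Aa ->]]; have [b <-] := pi_surj x; rewrite -rmorphM !dbE dA // rmorphM.
Qed.

Section Factor.
Variables (Q : pzRingType) (sigma : {rmorphism E -> Q}).
Hypothesis sigma_ker : forall e, pi e = 0 -> sigma e = 0.

Definition factor_fun x := sigma (pinv x).

Lemma factor_funE e : factor_fun (pi e) = sigma e.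
Proof. by apply: (pinv_pi_eq (g := sigma)) => // x y; rewrite rmorphB. Qed.

Lemma factor_zmod_morphism : zmod_morphism factor_fun.
Proof.
by move=> x y; have [a <-] := pi_surj x; have [b <-] := pi_surj y;
  rewrite -rmorphB !factor_funE rmorphB.
Qed.

Lemma factor_monoid_morphism : monoid_morphism factor_fun.
Proof.
split; first by rewrite -(rmorph1 pi) factor_funE rmorph1.
by move=> x y; have [a <-] := pi_surj x; have [b <-] := pi_surj y;
  rewrite -rmorphM !factor_funE rmorphM.
Qed.

HB.instance Definition _ :=
  GRing.isZmodMorphism.Build Ebar Q factor_fun factor_zmod_morphism.
HB.instance Definition _ :=
  GRing.isMonoidMorphism.Build Ebar Q factor_fun factor_monoid_morphism.

Definition factor : {rmorphism Ebar -> Q} := factor_fun.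

Lemma factorE e : factor (pi e) = sigma e.
Proof. exact: factor_funE. Qed.

End Factor.
End Quotient.

Section QuotientFractions.
Variables (E Ebar Q : pzRingType) (pi : {rmorphism E -> Ebar}).
Variables (sigma : {rmorphism E -> Q}) (S : E -> Prop).
Hypotheses (pi_surj : forall x, exists e, pi e = x) (HS : left_denom (fun _ => True) S).
Hypothesis pi_ker : forall e, pi e = 0 <-> ass (fun _ => True) S e.
Hypothesis Hsig : left_frac (fun _ => True) S (fun _ => True) sigma.

Let Sbar x := exists s, S s /\ x = pi s.

Lemma sigma_ker_pi e : pi e = 0 -> sigma e = 0.
Proof. by move/pi_ker/(left_frac_ker Hsig I). Qed.

Local Notation rho := (factor pi_surj sigma_ker_pi).

Lemma left_denom_image : left_denom (fun _ => True) Sbar.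
Proof.
have [[_ S1 SM S0] [Ore Den]] := HS.
split; [split=> // | split].
- by exists 1; rewrite rmorph1.
- by move=> _ _ [s [Ss ->]] [t [St ->]]; exists (s * t); rewrite rmorphM; split=> //; exact: SM.
- case=> s [Ss /esym/pi_ker [_ [t [St ts0]]]].
  by apply: S0; rewrite -ts0; exact: SM.
- move=> x _ _ [s [Ss ->]]; have [e <-] := pi_surj x.
  have [t [r [St _ tes]]] := Ore e s I Ss.
  by exists (pi t), (pi r); split; [exists t | | rewrite -!rmorphM tes].
- move=> x _ _ [s [Ss ->]]; have [e <-] := pi_surj x.
  rewrite -rmorphM => /pi_ker [_ [u [Su ues]]].
  have ue_s : u * e * s = 0 by rewrite -mulrA.
  have [t [St tue]] := Den (u * e) s I Ss ue_s.
  exists (pi (t * u)); split; first by exists (t * u); split=> //; exact: SM.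
  by rewrite -rmorphM -mulrA tue rmorph0.
Qed.

Lemma factor_inj x : rho x = 0 -> x = 0.
Proof. by have [e <-] := pi_surj x; rewrite factorE => /(left_frac_ker Hsig I)/pi_ker. Qed.

Lemma left_frac_factor : left_frac (fun _ => True) Sbar (fun _ => True) rho.
Proof.
have [_ inv repP _] := Hsig; have [[_ S1 SM _] _] := HS.
split=> //.
- by move=> _ [s [Ss ->]]; rewrite factorE; exact: inv.
- move=> x _; have [s [e [Ss _ sx]]] := repP x I.
  by exists (pi s), (pi e); split=> //; [exists s | rewrite !factorE].
move=> x _; have [e <-] := pi_surj x; split=> [/factor_inj ->|[_ [_ [[s [Ss ->]]]]]].
  by split=> //; exists 1; split; [exists 1; rewrite rmorph1 | rewrite mulr0].
rewrite -rmorphM => /pi_ker [_ [u [Su use]]].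
have /pi_ker -> : ass (fun _ => True) S e.
  by split=> //; exists (u * s); split; [exact: SM | rewrite -mulrA].
by rewrite rmorph0.
Qed.

Variables (D : (E -> E) -> Prop) (dbar : (E -> E) -> Ebar -> Ebar).
Hypothesis dbarE : forall d, D d -> forall e, dbar d (pi e) = pi (d e).
Let Dbar g := exists d, D d /\ g = dbar d.

Lemma ext_set_quotient ext ext' : ext_spec sigma S D ext -> ext_spec rho Sbar Dbar ext' ->
  forall g, ext_set Dbar ext' g <-> ext_set D ext g.
Proof.
move=> Hext Hext'.
have ext'E d : D d -> ext' (dbar d) = ext d.
  move=> Dd; apply: (ext_spec_unique Hsig Hext Dd) => s e q Ss sq.
  have Sbar_s : Sbar (pi s) by exists s.
  have := Hext' (dbar d) (ex_intro _ d (conj Dd erefl)) (pi s) (pi e) q Sbar_s.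
  by rewrite dbarE // !factorE; apply.
move=> g; split=> [[_ [[d [Dd ->]] ->]]|[d [Dd ->]]].
  by exists d; rewrite ext'E.
by exists (dbar d); split; [exists d | rewrite ext'E].
Qed.

End QuotientFractions.

Theorem proposition2p6 (K : fieldType) (E : algType K) (A : E -> Prop)
  (Delta : (E -> E) -> Prop) (I : E -> Prop) (S : E -> Prop)
  (Q : pzRingType) (sigma : {rmorphism E -> Q})
  (Ebar : pzRingType) (pi : {rmorphism E -> Ebar}) :
  is_subalg A ->
  (forall d, Delta d -> is_derA A d) ->
  is_ideal I ->
  left_denom (fun _ => True) S ->
  (forall e, ass (fun _ => True) S e <-> I e) ->
  (forall s, S s -> nil_i Delta 0 s) ->
  (* Q = S^{-1}E with canonical map sigma *)
  left_frac (fun _ => True) S (fun _ => True) sigma ->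
  (* Ebar = E/I with canonical projection pi *)
  (forall x : Ebar, exists e, pi e = x) ->
  (forall e, pi e = 0 <-> I e) ->
  [/\
   (* (1) *)
   (forall d, Delta d -> forall e, I e -> I (d e)) /\
   (forall d, Delta d -> exists db : Ebar -> Ebar,
       (forall e, db (pi e) = pi (d e)) /\
       is_derA (fun x => exists a, A a /\ x = pi a) db),
   (* (2) *)
   finite_set_of Delta ->
     left_denom (nil_all Delta) S /\
     (forall n, ass (nil_all Delta) S n <-> nil_all Delta n /\ I n),
   (* (3) *)
   finite_set_of Delta -> forall ext, ext_spec sigma S Delta ext ->
     left_frac (nil_all Delta) S (nil_all (ext_set Delta ext)) sigma,
   (* (4) *)
   finite_set_of Delta -> forall ext, ext_spec sigma S Delta ext ->
     forall i, left_frac (nil_i Delta i) S (nil_i (ext_set Delta ext) i) sigma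
  &
   (* (5) *)
   forall dbar : (E -> E) -> Ebar -> Ebar,
     (forall d, Delta d -> forall e, dbar d (pi e) = pi (d e)) ->
     let Dbar := fun g => exists d, Delta d /\ g = dbar d in
     let Sbar := fun x => exists s, S s /\ x = pi s in
     exists rho : {rmorphism Ebar -> Q},
       [/\ (forall e, rho (pi e) = sigma e),
           left_denom (fun _ => True) Sbar,
           left_frac (fun _ => True) Sbar (fun _ => True) rho &
           forall ext ext', ext_spec sigma S Delta ext ->
             ext_spec rho Sbar Dbar ext' ->
             [/\ left_frac (nil_all Dbar) Sbar (nil_all (ext_set Dbar ext')) rho,
                 (forall q, nil_all (ext_set Dbar ext') q <->
                            nil_all (ext_set Delta ext) q),
                 (forall i, left_frac (nil_i Dbar i) Sbar
                                      (nil_i (ext_set Dbar ext') i) rho) &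
                 (forall i q, nil_i (ext_set Dbar ext') i q <->
                              nil_i (ext_set Delta ext) i q)]]].
Proof.
move=> _ derAD _ HS HassI S_const Hsig pi_surj pi_I.
have derD d : Delta d -> is_der d by move=> /derAD [].
have pi_ker e : pi e = 0 <-> ass (fun _ => True) S e.
  by split=> [/pi_I/HassI|/HassI/pi_I].
have I_stable d : Delta d -> forall e, I e -> I (d e).
  move=> Dd e /HassI/(ass_der (derD d Dd)) Hde; apply/HassI/Hde => s Ss.
  exact: nil0_der (S_const s Ss) Dd.
have [[_ S1 _ _] _] := HS.
split.
- split=> // d Dd; apply: (quotient_derA pi_surj (derAD d Dd)).
  by move=> e /pi_I/(I_stable d Dd)/pi_I.
- move=> finD; split; first exact: left_denom_nil_all.
  by move=> n; rewrite assE; split=> -[nn /HassI]; split.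
- move=> finD ext Hext; apply: (left_frac_nil_all Hsig) => i.
  exact: left_frac_nil_i.
- by move=> finD ext Hext i; exact: left_frac_nil_i.
move=> dbar dbarE Dbar Sbar.
pose rho := factor pi_surj (sigma_ker_pi pi_ker Hsig).
have Hrho : left_frac (fun _ => True) Sbar (fun _ => True) rho.
  exact: left_frac_factor.
have rho_inj x : rho x = 0 -> x = 0 by exact: factor_inj.
have Sbar1 : Sbar 1 by exists 1; rewrite rmorph1.
exists rho; split=> //; [exact: factorE | exact: left_denom_image |].
move=> ext ext' Hext Hext'.
have eqD := ext_set_quotient dbarE Hext Hext'.
have frac_i i := left_frac_nil_i_inj Hrho Hext' Sbar1 i rho_inj.
split=> [||//|i q]; first exact: left_frac_nil_all.
- by move=> q; apply: nil_all_eq.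
- exact: nil_i_eq.
Qed.
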